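(* Let $n>1$. For each $k\ge1$ the set of $N\in\mathcal{G}_n$ with $\mathbb{F}_n/N$ nilpotent of class at most $k$ is clopen, and the set $\{N\in\mathcal{G}_n:\mathbb{F}_n/N\text{ is nilpotent}\}$ is $\mathbf{\Sigma}^0_1$-complete.
   Context: $\mathbb{F}_n$ is the free group on $\gamma_1,\dots,\gamma_n$. $\mathcal{G}_n$ is the set of normal subgroups $N\trianglelefteq\mathbb{F}_n$, viewed as a subset of $\{0,1\}^{\mathbb{F}_n}$ with the subspace topology of the product of discrete topologies (a compact zero-dimensional Polish space). $\mathbf{\Sigma}^0_1$ = open sets. $A\subseteq X$ is $\mathbf{\Sigma}^0_1$-complete if it is open and for every zero-dimensional Polish space $Y$ and every open $B\subseteq Y$ there is a continuous $f:Y\to X$ with $f^{-1}[A]=B$. *)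

From Stdlib Require Import Reals List Bool Arith Lia.
Import ListNotations.
Open Scope R_scope.

(** * The free group F_n on gamma_0 .. gamma_{n-1} (gamma_1..gamma_n in the paper) *)

(* a letter (i, b): generator i, inverted iff b = true *)
Definition letter := (nat * bool)%type.

Definition cancels (a b : letter) : bool :=
  Nat.eqb (fst a) (fst b) && xorb (snd a) (snd b).

Fixpoint red (w : list letter) : list letter :=
  match w with
  | [] => []
  | a :: w' =>
      match red w' with
      | b :: r => if cancels a b then r else a :: b :: r
      | [] => [a]
      end
  end.

Fixpoint reducedb (w : list letter) : bool :=
  match w with
  | a :: ((b :: _) as t) => negb (cancels a b) && reducedb t
  | _ => true
  end.

Definition validb (n : nat) (w : list letter) : bool :=
  reducedb w && forallb (fun a => Nat.ltb (fst a) n) w.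

Definition FG (n : nat) : Type := { w : list letter | validb n w = true }.

Lemma reducedb_red : forall w, reducedb (red w) = true.
Proof.
  induction w as [|a w IH]; simpl; auto.
  destruct (red w) as [|b r] eqn:E; simpl; auto.
  destruct (cancels a b) eqn:C; simpl.
  - destruct r; simpl in *; auto. apply andb_prop in IH as [_ IH]; exact IH.
  - rewrite C; simpl; exact IH.
Qed.

Lemma in_red : forall w x, In x (red w) -> In x w.
Proof.
  induction w as [|a w IH]; simpl; auto.
  intros x H. destruct (red w) as [|b r] eqn:E.
  - destruct H as [H|[]]; auto.
  - destruct (cancels a b).
    + right; apply IH; simpl; auto.
    + destruct H as [H|H]; auto.
Qed.

Lemma validb_nf : forall n w,
  validb n (red (filter (fun a => Nat.ltb (fst a) n) w)) = true.
Proof.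
  intros n w. unfold validb. rewrite reducedb_red; simpl.
  apply forallb_forall. intros x Hx. apply in_red in Hx.
  apply filter_In in Hx. tauto.
Qed.

(* normal form of an arbitrary word (letters with index >= n are dropped;
   they never occur in the words we apply it to) *)
Definition nf (n : nat) (w : list letter) : FG n :=
  exist _ (red (filter (fun a => Nat.ltb (fst a) n) w)) (validb_nf n w).

Definition fg_one (n : nat) : FG n := nf n [].
Definition fg_mul {n : nat} (x y : FG n) : FG n := nf n (proj1_sig x ++ proj1_sig y).
Definition fg_inv {n : nat} (x : FG n) : FG n :=
  nf n (rev (map (fun a : letter => (fst a, negb (snd a))) (proj1_sig x))).
Definition fg_conj {n : nat} (g x : FG n) : FG n := fg_mul (fg_mul (fg_inv g) x) g.
Definition fg_comm {n : nat} (a b : FG n) : FG n :=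
  fg_mul (fg_mul (fg_inv a) (fg_inv b)) (fg_mul a b).

(** * Normal subgroups; subsets of F_n are points of {0,1}^{F_n} *)
Definition normal_sub (n : nat) (N : FG n -> bool) : Prop :=
  N (fg_one n) = true /\
  (forall x y, N x = true -> N y = true -> N (fg_mul x y) = true) /\
  (forall x, N x = true -> N (fg_inv x) = true) /\
  (forall g x, N x = true -> N (fg_conj g x) = true).

(* lcs n N i = preimage in F_n of gamma_{i+1}(F_n/N), the (i+1)-th term of the
   lower central series of F_n/N (gamma_1 = G, gamma_{j+1} = [gamma_j, G]). *)
Inductive lcs (n : nat) (N : FG n -> bool) : nat -> FG n -> Prop :=
  | lcs_top : forall x, lcs n N 0 x
  | lcs_N : forall i x, N x = true -> lcs n N i x
  | lcs_comm : forall i a b, lcs n N i a -> lcs n N (S i) (fg_comm a b)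
  | lcs_mul : forall i x y, lcs n N i x -> lcs n N i y -> lcs n N i (fg_mul x y)
  | lcs_inv : forall i x, lcs n N i x -> lcs n N i (fg_inv x).

Definition nilpotent_class_le (n : nat) (N : FG n -> bool) (k : nat) : Prop :=
  forall x, lcs n N k x -> N x = true.

Definition quotient_nilpotent (n : nat) (N : FG n -> bool) : Prop :=
  exists k, nilpotent_class_le n N k.

(** * Topology of G_n (subspace of the product {0,1}^{F_n}) *)
Definition open_G (n : nat) (A : (FG n -> bool) -> Prop) : Prop :=
  forall N, normal_sub n N -> A N ->
    exists L : list (FG n), forall N', normal_sub n N' ->
      (forall w, In w L -> N' w = N w) -> A N'.

Definition clopen_G (n : nat) (A : (FG n -> bool) -> Prop) : Prop :=
  open_G n A /\ open_G n (fun N => ~ A N).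

Definition is_metric {Y : Type} (d : Y -> Y -> R) : Prop :=
  (forall x y, 0 <= d x y) /\ (forall x y, d x y = 0 <-> x = y) /\
  (forall x y, d x y = d y x) /\ (forall x y z, d x z <= d x y + d y z).

Definition complete_metric {Y : Type} (d : Y -> Y -> R) : Prop :=
  forall u : nat -> Y,
    (forall eps, 0 < eps -> exists N, forall p q, (N <= p)%nat -> (N <= q)%nat ->
        d (u p) (u q) < eps) ->
    exists l, forall eps, 0 < eps -> exists N, forall p, (N <= p)%nat -> d (u p) l < eps.

Definition separable_metric {Y : Type} (d : Y -> Y -> R) : Prop :=
  exists s : nat -> option Y, forall y eps, 0 < eps ->
    exists m z, s m = Some z /\ d y z < eps.

Definition polish {Y : Type} (d : Y -> Y -> R) : Prop :=
  is_metric d /\ complete_metric d /\ separable_metric d.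

Definition open_in {Y : Type} (d : Y -> Y -> R) (B : Y -> Prop) : Prop :=
  forall y, B y -> exists eps, 0 < eps /\ forall z, d y z < eps -> B z.

Definition zero_dim {Y : Type} (d : Y -> Y -> R) : Prop :=
  forall y eps, 0 < eps -> exists U : Y -> Prop,
    open_in d U /\ open_in d (fun z => ~ U z) /\ U y /\
    forall z, U z -> d y z < eps.

(* continuity of f : Y -> G_n into the product of discrete {0,1}:
   each coordinate is locally constant *)
Definition continuous_to_G {Y : Type} (d : Y -> Y -> R) (n : nat)
    (f : Y -> (FG n -> bool)) : Prop :=
  (forall y, normal_sub n (f y)) /\
  (forall y w, exists eps, 0 < eps /\ forall z, d y z < eps -> f z w = f y w).

Definition Sigma01_complete_G (n : nat) (A : (FG n -> bool) -> Prop) : Prop :=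
  open_G n A /\
  forall (Y : Type) (d : Y -> Y -> R), polish d -> zero_dim d ->
    forall B : Y -> Prop, open_in d B ->
      exists f : Y -> (FG n -> bool), continuous_to_G d n f /\
        forall y, A (f y) <-> B y.

(* Since F_n is finitely generated, F_n/N has class at most k iff the finitely
   many left-normed commutators [gamma_j0, gamma_j1, ..., gamma_jk] of generators lie in N;
   so this condition depends on finitely many coordinates of N and is open. Its failure is
   also witnessed at a single coordinate, because gamma_(k+1)(F_n/N) is the image of
   gamma_(k+1)(F_n).

   For completeness, send gamma_0 and gamma_1 to the two generating involutions of the
   infinite dihedral group D_inf = Z x| Z/2. The preimage N_m of the rotations by multiples
   of 2^m gives a dihedral 2-group F_n/N_m of class m, the preimage N_inf of the trivial
   rotation gives F_n/N_inf = D_inf, which is not nilpotent, and N_m -> N_inf pointwise.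
   An open set B of a zero-dimensional Polish space is a countable union of clopen sets
   C_j; sending y in B to N_(j+1) for the least j with y in C_j and the points outside B
   to N_inf is continuous and pulls the nilpotent quotients back to exactly B. *)

From Stdlib Require Import Reals List.
From Stdlib Require Import Lra Bool Arith Lia ZArith Eqdep_dec Wf_nat.
From Stdlib Require Import Classical ClassicalEpsilon Cantor.
Import ListNotations.
Open Scope nat_scope.

Definition push (a : letter) (s : list letter) : list letter :=
  match s with
  | b :: r => if cancels a b then r else a :: b :: r
  | [] => [a]
  end.

Lemma red_cons a w : red (a :: w) = push a (red w).
Proof. reflexivity. Qed.

Lemma red_app u v : red (u ++ v) = fold_right push (red v) u.
Proof. induction u as [|a u IH]; simpl; [reflexivity|]. now rewrite IH. Qed.

Lemma cancels_trans a b c : cancels a b = true -> cancels b c = true -> a = c.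
Proof.
  destruct a as [i x], b as [j y], c as [k z]; unfold cancels; simpl.
  intros [Hij Hxy]%andb_prop [Hjk Hyz]%andb_prop.
  apply Nat.eqb_eq in Hij, Hjk; subst.
  destruct x, y, z; simpl in *; congruence.
Qed.

Lemma reducedb_tail a s : reducedb (a :: s) = true -> reducedb s = true.
Proof. destruct s; simpl; [auto|]. now intros [_ H]%andb_prop. Qed.

Lemma push_cancel a b s :
  cancels a b = true -> reducedb s = true -> push a (push b s) = s.
Proof.
  intros Hab Hs. destruct s as [|c s]; simpl; [now rewrite Hab|].
  destruct (cancels b c) eqn:Hbc.
  - assert (a = c) by (eapply cancels_trans; eauto); subst c.
    destruct s as [|d s]; simpl; [reflexivity|].
    simpl in Hs. apply andb_prop in Hs as [Hs _].
    destruct (cancels a d); simpl in Hs; congruence.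
  - simpl. now rewrite Hab.
Qed.

Lemma red_reduced w : reducedb w = true -> red w = w.
Proof.
  induction w as [|a w IH]; simpl; [reflexivity|]. intro H.
  rewrite IH by (eapply reducedb_tail; eauto).
  destruct w as [|b r]; [reflexivity|]. simpl in H. apply andb_prop in H as [H _].
  destruct (cancels a b); simpl in H; congruence.
Qed.

Lemma red_idem w : red (red w) = red w.
Proof. apply red_reduced, reducedb_red. Qed.

Lemma red_app_red_r u v : red (u ++ red v) = red (u ++ v).
Proof. now rewrite !red_app, red_idem. Qed.

Lemma red_app_red_l u v : red (red u ++ v) = red (u ++ v).
Proof.
  induction u as [|a u IH]; [reflexivity|].
  change ((a :: u) ++ v) with (a :: (u ++ v)).
  rewrite !red_cons, <- IH.
  destruct (red u) as [|b r] eqn:E; [reflexivity|].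
  change (push a (b :: r)) with (if cancels a b then r else a :: b :: r).
  destruct (cancels a b) eqn:C; [|reflexivity].
  change ((b :: r) ++ v) with (b :: (r ++ v)).
  rewrite red_cons, push_cancel; auto using reducedb_red.
Qed.

Definition flip (a : letter) : letter := (fst a, negb (snd a)).
Definition winv (w : list letter) : list letter := rev (map flip w).

Lemma cancels_flip_l a : cancels (flip a) a = true.
Proof. destruct a as [i []]; unfold cancels, flip; simpl; now rewrite Nat.eqb_refl. Qed.

Lemma winvK w : winv (winv w) = w.
Proof.
  unfold winv. rewrite map_rev, rev_involutive, map_map.
  rewrite <- (map_id w) at 2. apply map_ext.
  intros [i b]; unfold flip; simpl; now rewrite negb_involutive.
Qed.

Lemma red_winv_l w : red (winv w ++ w) = [].
Proof.
  induction w as [|a w IH]; [reflexivity|].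
  unfold winv in *; simpl. rewrite <- app_assoc; simpl.
  rewrite <- red_app_red_r, !red_cons, push_cancel by auto using cancels_flip_l, reducedb_red.
  now rewrite red_app_red_r.
Qed.

Lemma red_winv_r w : red (w ++ winv w) = [].
Proof. rewrite <- (winvK w) at 1. apply red_winv_l. Qed.

Definition letters_below (n : nat) (w : list letter) : Prop :=
  forallb (fun a => Nat.ltb (fst a) n) w = true.

Lemma letters_below_filter n w :
  letters_below n w -> filter (fun a => Nat.ltb (fst a) n) w = w.
Proof.
  unfold letters_below; induction w as [|a w IH]; simpl; [reflexivity|].
  intros [-> H]%andb_prop. now rewrite IH.
Qed.

Lemma letters_below_app n u v :
  letters_below n u -> letters_below n v -> letters_below n (u ++ v).
Proof. unfold letters_below; rewrite forallb_app; intros Hu Hv.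
  apply andb_true_intro; split; assumption.
Qed.

Lemma letters_below_winv n w : letters_below n w -> letters_below n (winv w).
Proof.
  unfold letters_below, winv; rewrite !forallb_forall. intros H x Hx.
  apply in_rev, in_map_iff in Hx as [y [<- Hy]]. exact (H y Hy).
Qed.

Lemma letters_below_val n (x : FG n) : letters_below n (proj1_sig x).
Proof. destruct x as [w H]; simpl. now apply andb_prop in H. Qed.

Lemma reduced_val n (x : FG n) : reducedb (proj1_sig x) = true.
Proof. destruct x as [w H]; simpl. now apply andb_prop in H. Qed.

Lemma FG_val_inj n (x y : FG n) : proj1_sig x = proj1_sig y -> x = y.
Proof.
  destruct x as [w H], y as [w' H']; simpl; intros <-.
  f_equal. apply UIP_dec, bool_dec.
Qed.

Lemma nf_val n w : letters_below n w -> proj1_sig (nf n w) = red w.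
Proof. intro H; simpl. now rewrite letters_below_filter. Qed.

Lemma fg_mul_val n (x y : FG n) :
  proj1_sig (fg_mul x y) = red (proj1_sig x ++ proj1_sig y).
Proof. apply nf_val, letters_below_app; apply letters_below_val. Qed.

Lemma fg_inv_val n (x : FG n) : proj1_sig (fg_inv x) = red (winv (proj1_sig x)).
Proof. apply nf_val, letters_below_winv, letters_below_val. Qed.

Section FreeGroupLaws.
Variable n : nat.
Implicit Types x y z : FG n.

Lemma fg_mulA x y z : fg_mul x (fg_mul y z) = fg_mul (fg_mul x y) z.
Proof.
  apply FG_val_inj. rewrite !fg_mul_val, red_app_red_r, red_app_red_l.
  now rewrite app_assoc.
Qed.

Lemma fg_mul1l x : fg_mul (fg_one n) x = x.
Proof. apply FG_val_inj. rewrite fg_mul_val. apply red_reduced, reduced_val. Qed.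

Lemma fg_mul1r x : fg_mul x (fg_one n) = x.
Proof.
  apply FG_val_inj. rewrite fg_mul_val; simpl. rewrite app_nil_r.
  apply red_reduced, reduced_val.
Qed.

Lemma fg_mulVl x : fg_mul (fg_inv x) x = fg_one n.
Proof.
  apply FG_val_inj. now rewrite fg_mul_val, fg_inv_val, red_app_red_l, red_winv_l.
Qed.

Lemma fg_mulVr x : fg_mul x (fg_inv x) = fg_one n.
Proof.
  apply FG_val_inj. now rewrite fg_mul_val, fg_inv_val, red_app_red_r, red_winv_r.
Qed.

Lemma fg_mulKl x y : fg_mul (fg_inv x) (fg_mul x y) = y.
Proof. now rewrite fg_mulA, fg_mulVl, fg_mul1l. Qed.

Lemma fg_mulKr x y : fg_mul x (fg_mul (fg_inv x) y) = y.
Proof. now rewrite fg_mulA, fg_mulVr, fg_mul1l. Qed.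

Lemma fg_inv_unique x y : fg_mul x y = fg_one n -> fg_inv x = y.
Proof. intro H. now rewrite <- (fg_mul1r (fg_inv x)), <- H, fg_mulKl. Qed.

Lemma fg_invK x : fg_inv (fg_inv x) = x.
Proof. apply fg_inv_unique, fg_mulVl. Qed.

Lemma fg_invM x y : fg_inv (fg_mul x y) = fg_mul (fg_inv y) (fg_inv x).
Proof.
  apply fg_inv_unique. now rewrite <- fg_mulA, (fg_mulA y), fg_mulVr, fg_mul1l, fg_mulVr.
Qed.

Lemma fg_inv1 : fg_inv (fg_one n) = fg_one n.
Proof. apply fg_inv_unique, fg_mul1l. Qed.

End FreeGroupLaws.

Ltac group_simpl :=
  unfold fg_comm, fg_conj in *;
  repeat rewrite ?fg_invM, ?fg_invK, ?fg_inv1, ?fg_mul1l, ?fg_mul1r, ?fg_mulA;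
  repeat rewrite <- ?fg_mulA;
  repeat rewrite ?fg_mulKl, ?fg_mulKr, ?fg_mulVl, ?fg_mulVr, ?fg_mul1l, ?fg_mul1r.

Section Commutators.
Variable n : nat.
Implicit Types x y z g h : FG n.

Lemma fg_comm1l g : fg_comm (fg_one n) g = fg_one n.
Proof. group_simpl. reflexivity. Qed.

Lemma fg_comm1r g : fg_comm g (fg_one n) = fg_one n.
Proof. group_simpl. reflexivity. Qed.

Lemma fg_commMl x y g :
  fg_comm (fg_mul x y) g = fg_mul (fg_conj y (fg_comm x g)) (fg_comm y g).
Proof. group_simpl. reflexivity. Qed.

Lemma fg_commVl x g :
  fg_comm (fg_inv x) g = fg_inv (fg_conj (fg_inv x) (fg_comm x g)).
Proof. group_simpl. reflexivity. Qed.

Lemma fg_commJl x h g :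
  fg_comm (fg_conj h x) g = fg_conj h (fg_comm x (fg_conj (fg_inv h) g)).
Proof. group_simpl. reflexivity. Qed.

Lemma fg_commMr x g h :
  fg_comm x (fg_mul g h) = fg_mul (fg_comm x h) (fg_conj h (fg_comm x g)).
Proof. group_simpl. reflexivity. Qed.

Lemma fg_commVr x g :
  fg_comm x (fg_inv g) = fg_inv (fg_conj (fg_inv g) (fg_comm x g)).
Proof. group_simpl. reflexivity. Qed.

Lemma fg_comm_conj x g : fg_comm x g = fg_mul (fg_inv x) (fg_conj g x).
Proof. group_simpl. reflexivity. Qed.

End Commutators.

Definition fg_gen (n j : nat) : FG n := nf n [(j, false)].

Lemma nf_cons n a w :
  letters_below n (a :: w) -> nf n (a :: w) = fg_mul (nf n [a]) (nf n w).
Proof.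
  intro H. unfold letters_below in H; simpl in H; apply andb_prop in H as [Ha Hw].
  apply FG_val_inj. rewrite fg_mul_val, !nf_val; unfold letters_below; simpl;
    try rewrite Ha; auto.
  now rewrite red_idem.
Qed.

Lemma nf_letter n j b :
  j < n -> nf n [(j, b)] = if b then fg_inv (fg_gen n j) else fg_gen n j.
Proof.
  intro Hj. destruct b; [|reflexivity].
  assert (Hb : forall b, letters_below n [(j, b)])
    by (intro b; unfold letters_below; simpl; now rewrite (proj2 (Nat.ltb_lt j n) Hj)).
  apply FG_val_inj. rewrite fg_inv_val. unfold fg_gen. now rewrite !nf_val.
Qed.

Lemma fg_gen_ind n (P : FG n -> Prop) :
  P (fg_one n) ->
  (forall x y, P x -> P y -> P (fg_mul x y)) ->
  (forall x, P x -> P (fg_inv x)) ->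
  (forall j, j < n -> P (fg_gen n j)) ->
  forall x, P x.
Proof.
  intros P1 PM PV Pgen.
  assert (Pnf : forall w, letters_below n w -> P (nf n w)).
  { induction w as [|[j b] w IH]; intro Hw; [exact P1|].
    rewrite nf_cons by exact Hw.
    unfold letters_below in Hw; simpl in Hw; apply andb_prop in Hw as [Hj Hw].
    apply Nat.ltb_lt in Hj. rewrite nf_letter by exact Hj.
    apply PM; [destruct b|]; auto. }
  intro x. replace x with (nf n (proj1_sig x)) by
    (apply FG_val_inj; rewrite nf_val by apply letters_below_val;
     apply red_reduced, reduced_val).
  apply Pnf, letters_below_val.
Qed.

Definition normal_pred (n : nat) (P : FG n -> Prop) : Prop :=
  P (fg_one n) /\ (forall x y, P x -> P y -> P (fg_mul x y)) /\
  (forall x, P x -> P (fg_inv x)) /\ (forall g x, P x -> P (fg_conj g x)).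

Section UpperCentralSeries.
Variables (n : nat) (N : FG n -> bool).
Hypothesis HN : normal_sub n N.

(* The preimage in F_n of the i-th term Z_i(F_n/N) of the upper central series. *)
Fixpoint upper_central (i : nat) (z : FG n) : Prop :=
  match i with
  | 0 => N z = true
  | S i => forall g, upper_central i (fg_comm z g)
  end.

Lemma upper_central_normal i : normal_pred n (upper_central i).
Proof.
  induction i as [|i (U1 & UM & UV & UJ)].
  - destruct HN as (N1 & NM & NV & NJ). now repeat split.
  - repeat split; simpl.
    + intro g. now rewrite fg_comm1l.
    + intros x y Hx Hy g. rewrite fg_commMl. auto.
    + intros x Hx g. rewrite fg_commVl. auto.
    + intros h x Hx g. rewrite fg_commJl. auto.
Qed.

Lemma normal_comm x g : N x = true -> N (fg_comm x g) = true.
Proof.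
  destruct HN as (N1 & NM & NV & NJ). intro Hx. rewrite fg_comm_conj. auto.
Qed.

Lemma upper_central_S i z : upper_central i z -> upper_central (S i) z.
Proof.
  revert z; induction i as [|i IH]; simpl; intros z Hz g.
  - now apply normal_comm.
  - apply IH, Hz.
Qed.

Lemma upper_central_of_normal i z : N z = true -> upper_central i z.
Proof. induction i as [|i IH]; [auto|]. intro Hz. now apply upper_central_S, IH. Qed.

Lemma lcs_upper_central k :
  (forall z, upper_central k z) -> forall i x, lcs n N i x -> upper_central (k - i) x.
Proof.
  intro Hk. induction 1 as [x|i x Hx|i a b _ IH|i x y _ IHx _ IHy|i x _ IH].
  - now rewrite Nat.sub_0_r.
  - now apply upper_central_of_normal.
  - destruct (Nat.lt_ge_cases i k) as [Hik|Hik].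
    + replace (k - i) with (S (k - S i)) in IH by lia. apply IH.
    + replace (k - i) with 0 in IH by lia. replace (k - S i) with 0 by lia.
      now apply normal_comm.
  - now apply (upper_central_normal (k - i)).
  - now apply (upper_central_normal (k - i)).
Qed.

End UpperCentralSeries.

Fixpoint left_normed_comms (n i : nat) (c : FG n) : list (FG n) :=
  match i with
  | 0 => [c]
  | S i => flat_map (fun j => left_normed_comms n i (fg_comm c (fg_gen n j))) (seq 0 n)
  end.

Definition basic_commutators (n k : nat) : list (FG n) :=
  flat_map (fun j => left_normed_comms n k (fg_gen n j)) (seq 0 n).

Lemma upper_central_of_left_normed n N (HN : normal_sub n N) i c :
  (forall d, In d (left_normed_comms n i c) -> N d = true) -> upper_central n N i c.
Proof.
  revert c; induction i as [|i IH]; simpl; intros c Hc; [auto|].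
  destruct (upper_central_normal n N HN i) as (U1 & UM & UV & UJ).
  apply (fg_gen_ind n (fun g => upper_central n N i (fg_comm c g))).
  - now rewrite fg_comm1r.
  - intros x y Hx Hy. rewrite fg_commMr. auto.
  - intros x Hx. rewrite fg_commVr. auto.
  - intros j Hj. apply IH. intros d Hd. apply Hc, in_flat_map.
    exists j; split; [apply in_seq; lia|exact Hd].
Qed.

Lemma lcs_of_left_normed n N i m c :
  lcs n N m c -> forall d, In d (left_normed_comms n i c) -> lcs n N (m + i) d.
Proof.
  revert m c; induction i as [|i IH]; simpl; intros m c Hc d Hd.
  - destruct Hd as [<-|[]]. now rewrite Nat.add_0_r.
  - apply in_flat_map in Hd as [j [_ Hd]]. replace (m + S i) with (S m + i) by lia.
    exact (IH _ _ (lcs_comm n N m c _ Hc) d Hd).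
Qed.

Lemma nilpotent_class_le_iff_basic n N k :
  normal_sub n N ->
  nilpotent_class_le n N k <-> forall c, In c (basic_commutators n k) -> N c = true.
Proof.
  intro HN. split.
  - intros Hk c Hc. apply Hk. apply in_flat_map in Hc as [j [_ Hc]].
    exact (lcs_of_left_normed n N k 0 _ (lcs_top n N _) c Hc).
  - intros Hbasic x Hx.
    assert (Hk : forall z, upper_central n N k z).
    { destruct (upper_central_normal n N HN k) as (U1 & UM & UV & UJ).
      apply fg_gen_ind; auto. intros j Hj. apply upper_central_of_left_normed; auto.
      intros d Hd. apply Hbasic, in_flat_map.
      exists j; split; [apply in_seq; lia|exact Hd]. }
    pose proof (lcs_upper_central n N HN k Hk k x Hx) as Hx'.
    now rewrite Nat.sub_diag in Hx'.
Qed.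

Lemma open_nilpotent_class_le n k : open_G n (fun N => nilpotent_class_le n N k).
Proof.
  intros N HN Hk. exists (basic_commutators n k). intros N' HN' Hagree.
  apply nilpotent_class_le_iff_basic; auto. intros c Hc.
  rewrite Hagree by exact Hc.
  exact (proj1 (nilpotent_class_le_iff_basic n N k HN) Hk c Hc).
Qed.

Definition lcs_free (n i : nat) (x : FG n) : Prop := lcs n (fun _ => false) i x.

Lemma lcs_free_one n i : lcs_free n i (fg_one n).
Proof.
  induction i as [|i IH]; [constructor|].
  rewrite <- (fg_comm1l n (fg_one n)). now apply lcs_comm.
Qed.

Lemma lcs_of_lcs_free n N i x : lcs_free n i x -> lcs n N i x.
Proof.
  induction 1; try discriminate; eauto using lcs_top, lcs_comm, lcs_mul, lcs_inv.
Qed.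

Section CongruenceModN.
Variables (n : nat) (N : FG n -> bool).
Hypothesis HN : normal_sub n N.

Definition congr_mod (x y : FG n) : Prop := N (fg_mul (fg_inv x) y) = true.

Lemma congr_mod_refl x : congr_mod x x.
Proof. unfold congr_mod. rewrite fg_mulVl. apply HN. Qed.

Lemma congr_modM x x' y y' :
  congr_mod x x' -> congr_mod y y' -> congr_mod (fg_mul x y) (fg_mul x' y').
Proof.
  unfold congr_mod; intros Hx Hy. destruct HN as (N1 & NM & NV & NJ).
  replace (fg_mul (fg_inv (fg_mul x y)) (fg_mul x' y'))
    with (fg_mul (fg_conj y (fg_mul (fg_inv x) x')) (fg_mul (fg_inv y) y'))
    by (group_simpl; reflexivity).
  auto.
Qed.

Lemma congr_modV x x' : congr_mod x x' -> congr_mod (fg_inv x) (fg_inv x').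
Proof.
  unfold congr_mod; intro Hx. destruct HN as (N1 & NM & NV & NJ).
  replace (fg_mul (fg_inv (fg_inv x)) (fg_inv x'))
    with (fg_inv (fg_conj (fg_inv x) (fg_mul (fg_inv x) x')))
    by (group_simpl; reflexivity).
  auto.
Qed.

Lemma congr_mod_comm a a' b : congr_mod a a' -> congr_mod (fg_comm a b) (fg_comm a' b).
Proof.
  intro Ha. unfold fg_comm.
  auto using congr_modM, congr_modV, congr_mod_refl.
Qed.

Lemma congr_mod_normal x y : congr_mod x y -> N x = true -> N y = true.
Proof.
  unfold congr_mod; intros Hxy Hx. replace y with (fg_mul x (fg_mul (fg_inv x) y))
    by (group_simpl; reflexivity).
  now apply HN.
Qed.

Lemma lcs_lift i x : lcs n N i x -> exists u, lcs_free n i u /\ congr_mod u x.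
Proof.
  induction 1 as [x|i x Hx|i a b _ [u [Hu Hua]]|i x y _ [u [Hu Hux]] _ [v [Hv Hvy]]
                 |i x _ [u [Hu Hux]]].
  - exists x. split; [constructor|apply congr_mod_refl].
  - exists (fg_one n). split; [apply lcs_free_one|].
    unfold congr_mod. now rewrite fg_inv1, fg_mul1l.
  - exists (fg_comm u b). split; [now apply lcs_comm|now apply congr_mod_comm].
  - exists (fg_mul u v). split; [now apply lcs_mul|now apply congr_modM].
  - exists (fg_inv u). split; [now apply lcs_inv|now apply congr_modV].
Qed.

End CongruenceModN.

Lemma open_not_nilpotent_class_le n k :
  open_G n (fun N => ~ nilpotent_class_le n N k).
Proof.
  intros N HN Hk.
  assert (Hw : exists u, lcs_free n k u /\ N u = false).
  { apply not_all_ex_not in Hk as [x Hx]. apply imply_to_and in Hx as [Hx Nx].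
    destruct (lcs_lift n N HN k x Hx) as [u [Hu Hux]].
    exists u. split; [exact Hu|].
    destruct (N u) eqn:Nu; [|reflexivity].
    exfalso. exact (Nx (congr_mod_normal n N HN u x Hux Nu)). }
  destruct Hw as [u [Hu Nu]].
  exists [u]. intros N' _ Hagree Hk'.
  specialize (Hk' u (lcs_of_lcs_free n N' k u Hu)).
  rewrite Hagree in Hk' by now left. congruence.
Qed.

(* [(a, b)] encodes t^a s^b in the infinite dihedral group <t, s | s^2 = 1, s t s = t^-1>. *)
Definition dih : Type := (Z * bool)%type.
Definition dih_one : dih := (0%Z, false).
Definition dih_mul (u v : dih) : dih :=
  ((fst u + (if snd u then - fst v else fst v))%Z, xorb (snd u) (snd v)).
Definition dih_inv (u : dih) : dih := (if snd u then fst u else (- fst u)%Z, snd u).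
Definition dih_comm (u v : dih) : dih := dih_mul (dih_mul (dih_inv u) (dih_inv v)) (dih_mul u v).

Lemma dih_mulA u v w : dih_mul u (dih_mul v w) = dih_mul (dih_mul u v) w.
Proof.
  destruct u as [a []], v as [b []], w as [c []]; unfold dih_mul; simpl; f_equal; lia.
Qed.

Lemma dih_mul1l u : dih_mul dih_one u = u.
Proof. destruct u as [a b]; reflexivity. Qed.

Lemma dih_inv_unique u v : dih_mul u v = dih_one -> u = dih_inv v.
Proof.
  destruct u as [a []], v as [b []]; unfold dih_mul, dih_inv, dih_one; simpl;
    intro H; inversion H; f_equal; lia.
Qed.

Lemma dih_comm_even u v : exists c, dih_comm u v = ((2 * c)%Z, false).
Proof.
  destruct u as [a []], v as [b []]; unfold dih_comm, dih_mul, dih_inv; cbn [fst snd xorb].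
  - exists (a - b)%Z. f_equal; lia.
  - exists b. f_equal; lia.
  - exists (- a)%Z. f_equal; lia.
  - exists 0%Z. f_equal; lia.
Qed.

Lemma dih_comm_rotation a v :
  dih_comm (a, false) v = (0%Z, false) \/ dih_comm (a, false) v = ((-2 * a)%Z, false).
Proof.
  destruct v as [b []]; unfold dih_comm, dih_mul, dih_inv; cbn [fst snd xorb];
    [right|left]; f_equal; lia.
Qed.

(* gamma_0 and gamma_1 go to the involutions s and t s, which generate the group;
   the other generators go to 1. *)
Definition dih_of_letter (a : letter) : dih :=
  match fst a with 0 => (0%Z, true) | 1 => (1%Z, true) | _ => dih_one end.

Definition dih_of_word (w : list letter) : dih :=
  fold_right (fun a acc => dih_mul (dih_of_letter a) acc) dih_one w.

Definition dih_of {n : nat} (x : FG n) : dih := dih_of_word (proj1_sig x).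

Lemma dih_of_letter_invol a : dih_mul (dih_of_letter a) (dih_of_letter a) = dih_one.
Proof. unfold dih_of_letter. now destruct (fst a) as [|[|k]]. Qed.

Lemma dih_of_word_app u v : dih_of_word (u ++ v) = dih_mul (dih_of_word u) (dih_of_word v).
Proof.
  induction u as [|a u IH]; simpl; [now rewrite dih_mul1l|]. now rewrite IH, dih_mulA.
Qed.

Lemma dih_of_word_red w : dih_of_word (red w) = dih_of_word w.
Proof.
  induction w as [|a w IH]; [reflexivity|]. rewrite red_cons. simpl. rewrite <- IH.
  destruct (red w) as [|b r]; [reflexivity|]. simpl.
  destruct (cancels a b) eqn:Hab; [|reflexivity].
  unfold cancels in Hab. apply andb_prop in Hab as [Hab _]. apply Nat.eqb_eq in Hab.
  unfold dih_of_letter at 2. rewrite <- Hab. fold (dih_of_letter a).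
  now rewrite dih_mulA, dih_of_letter_invol, dih_mul1l.
Qed.

Section DihedralImage.
Variable n : nat.
Implicit Types x y g : FG n.

Lemma dih_of_mul x y : dih_of (fg_mul x y) = dih_mul (dih_of x) (dih_of y).
Proof. unfold dih_of. now rewrite fg_mul_val, dih_of_word_red, dih_of_word_app. Qed.

Lemma dih_of_inv x : dih_of (fg_inv x) = dih_inv (dih_of x).
Proof.
  apply dih_inv_unique. rewrite <- dih_of_mul, fg_mulVl. reflexivity.
Qed.

Lemma dih_of_comm x y : dih_of (fg_comm x y) = dih_comm (dih_of x) (dih_of y).
Proof. unfold fg_comm, dih_comm. now rewrite !dih_of_mul, !dih_of_inv. Qed.

Lemma dih_of_conj g x :
  dih_of (fg_conj g x) = dih_mul (dih_mul (dih_inv (dih_of g)) (dih_of x)) (dih_of g).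
Proof. unfold fg_conj. now rewrite !dih_of_mul, !dih_of_inv. Qed.

Definition dih_preimage (p : Z -> bool) (x : FG n) : bool :=
  negb (snd (dih_of x)) && p (fst (dih_of x)).

Lemma dih_preimage_spec p x :
  dih_preimage p x = true <-> exists a, dih_of x = (a, false) /\ p a = true.
Proof.
  unfold dih_preimage. destruct (dih_of x) as [a []]; simpl; split.
  - discriminate.
  - now intros [b [Hb _]].
  - eauto.
  - now intros [b [Hb Hp]]; inversion Hb; subst.
Qed.

Lemma dih_preimage_normal (p : Z -> bool) :
  p 0%Z = true -> (forall a b, p a = true -> p b = true -> p (a + b)%Z = true) ->
  (forall a, p a = true -> p (- a)%Z = true) -> normal_sub n (dih_preimage p).
Proof.
  intros P0 PD PN. repeat split.
  - apply dih_preimage_spec. now exists 0%Z.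
  - intros x y [a [Ha Pa]]%dih_preimage_spec [b [Hb Pb]]%dih_preimage_spec.
    apply dih_preimage_spec. rewrite dih_of_mul, Ha, Hb. exists (a + b)%Z. auto.
  - intros x [a [Ha Pa]]%dih_preimage_spec.
    apply dih_preimage_spec. rewrite dih_of_inv, Ha. exists (- a)%Z. auto.
  - intros g x [a [Ha Pa]]%dih_preimage_spec.
    apply dih_preimage_spec. rewrite dih_of_conj, Ha.
    destruct (dih_of g) as [c []]; unfold dih_mul, dih_inv; simpl.
    + exists (- a)%Z. split; [f_equal; lia|auto].
    + exists a. split; [f_equal; lia|auto].
Qed.

End DihedralImage.

Definition pow2_divides (m : nat) (a : Z) : bool := Z.eqb (a mod 2 ^ Z.of_nat m) 0.

Lemma pow2_dividesP m a : pow2_divides m a = true <-> (2 ^ Z.of_nat m | a)%Z.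
Proof.
  unfold pow2_divides. rewrite Z.eqb_eq. apply Z.mod_divide.
  pose proof (Z.pow_pos_nonneg 2 (Z.of_nat m)). lia.
Qed.

Lemma pow2_divide_le a b : a <= b -> (2 ^ Z.of_nat a | 2 ^ Z.of_nat b)%Z.
Proof.
  intro Hab. exists (2 ^ Z.of_nat (b - a))%Z.
  rewrite <- Z.pow_add_r by lia. f_equal. lia.
Qed.

(* F_n / N_pow2 n m is the dihedral group of order 2^(m+1), of class m. *)
Definition N_pow2 (n m : nat) : FG n -> bool := dih_preimage n (pow2_divides m).

(* For n > 1, F_n / N_dih n is the infinite dihedral group. *)
Definition N_dih (n : nat) : FG n -> bool := dih_preimage n (fun a => Z.eqb a 0).

Lemma N_pow2_normal n m : normal_sub n (N_pow2 n m).
Proof.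
  apply dih_preimage_normal; intros; rewrite ?pow2_dividesP in *.
  - apply Z.divide_0_r.
  - now apply Z.divide_add_r.
  - now apply Z.divide_opp_r.
Qed.

Lemma N_dih_normal n : normal_sub n (N_dih n).
Proof. apply dih_preimage_normal; intros; rewrite ?Z.eqb_eq in *; lia. Qed.

(* Commutators with a rotation t^a are 1 or t^(-2a), so each step down the series gains a
   factor 2, up to the modulus 2^m. *)
Lemma lcs_N_pow2_rotations n m i x :
  lcs n (N_pow2 n m) i x ->
  i = 0 \/ (snd (dih_of x) = false /\ (2 ^ Z.of_nat (Nat.min i m) | fst (dih_of x))%Z).
Proof.
  induction 1 as [x|i x Hx|i a b _ IH|i x y _ IHx _ IHy|i x _ IH].
  - now left.
  - right. apply dih_preimage_spec in Hx as [a [-> Ha%pow2_dividesP]]. split; [reflexivity|].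
    eapply Z.divide_trans; [apply pow2_divide_le, Nat.le_min_r|exact Ha].
  - right. rewrite dih_of_comm.
    destruct IH as [->|[Ha Hdiv]].
    + destruct (dih_comm_even (dih_of a) (dih_of b)) as [c ->].
      split; [reflexivity|]. cbn [fst].
      eapply Z.divide_trans; [apply (pow2_divide_le _ 1); lia|].
      exact (Z.divide_factor_l 2 c).
    + destruct (dih_of a) as [c e]; simpl in Ha, Hdiv; subst e.
      destruct (dih_comm_rotation c (dih_of b)) as [-> | ->]; split; try reflexivity.
      * apply Z.divide_0_r.
      * cbn [fst]. eapply Z.divide_trans; [apply (pow2_divide_le _ (S (Nat.min i m))); lia|].
        rewrite Nat2Z.inj_succ, Z.pow_succ_r by lia.
        replace (-2 * c)%Z with (2 * - c)%Z by lia.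
        now apply Z.mul_divide_mono_l, Z.divide_opp_r.
  - destruct IHx as [->|[Hx Dx]]; [now left|]. destruct IHy as [->|[Hy Dy]]; [now left|].
    right. rewrite dih_of_mul. destruct (dih_of x) as [a e], (dih_of y) as [b f].
    simpl in *; subst. split; [reflexivity|]. now apply Z.divide_add_r.
  - destruct IH as [->|[Hx Dx]]; [now left|]. right. rewrite dih_of_inv.
    destruct (dih_of x) as [a e]; simpl in *; subst. split; [reflexivity|].
    now apply Z.divide_opp_r.
Qed.

Lemma N_pow2_nilpotent n m : 1 <= m -> nilpotent_class_le n (N_pow2 n m) m.
Proof.
  intros Hm x Hx. destruct (lcs_N_pow2_rotations n m m x Hx) as [->|[Hrot Hdiv]]; [lia|].
  unfold N_pow2, dih_preimage. rewrite Hrot. simpl. apply pow2_dividesP.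
  now rewrite Nat.min_id in Hdiv.
Qed.

Fixpoint comm_chain (n k : nat) : FG n :=
  match k with 0 => fg_gen n 1 | S k => fg_comm (comm_chain n k) (fg_gen n 0) end.

Lemma dih_of_gen n j : j < n -> dih_of (fg_gen n j) = dih_of_letter (j, false).
Proof.
  intro Hj. unfold dih_of, fg_gen. rewrite nf_val.
  - simpl. unfold dih_of_letter. now destruct j as [|[|j]].
  - unfold letters_below; simpl. now rewrite (proj2 (Nat.ltb_lt j n) Hj).
Qed.

Lemma dih_of_comm_chain n k :
  1 < n ->
  dih_of (comm_chain n k) = (1%Z, true) \/
  exists a, dih_of (comm_chain n k) = (a, false) /\ a <> 0%Z.
Proof.
  intro Hn. induction k as [|k IH]; [left; now apply dih_of_gen|]. right. simpl.
  rewrite dih_of_comm, (dih_of_gen n 0) by lia.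
  destruct IH as [->|[a [-> Ha]]]; [exists 2%Z|exists (-2 * a)%Z];
    (split; [unfold dih_comm, dih_mul, dih_inv, dih_of_letter; cbn [fst snd xorb];
             f_equal; lia|lia]).
Qed.

Lemma N_dih_not_nilpotent n k : 1 < n -> ~ nilpotent_class_le n (N_dih n) k.
Proof.
  intros Hn Hk.
  assert (Hchain : forall i, lcs n (N_dih n) i (comm_chain n i))
    by (induction i; simpl; [constructor|now apply lcs_comm]).
  pose proof (Hk _ (Hchain k)) as Hin.
  apply dih_preimage_spec in Hin as [b [Hb Hb0]].
  apply Z.eqb_eq in Hb0; subst b.
  destruct (dih_of_comm_chain n k Hn) as [Ha|[a [Ha Hnz]]]; rewrite Ha in Hb;
    inversion Hb; lia.
Qed.

Lemma N_pow2_eventually_N_dih n (x : FG n) :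
  exists M, forall j, M <= j -> N_pow2 n j x = N_dih n x.
Proof.
  exists (Z.to_nat (Z.abs (fst (dih_of x)))). intros j Hj.
  unfold N_pow2, N_dih, dih_preimage. f_equal.
  set (a := fst (dih_of x)) in *.
  destruct (Z.eqb_spec a 0) as [->|Ha].
  - apply pow2_dividesP, Z.divide_0_r.
  - destruct (pow2_divides j a) eqn:E; [|reflexivity]. exfalso.
    apply pow2_dividesP, Z.divide_abs_r, Z.divide_pos_le in E; [|lia].
    pose proof (Z.pow_gt_lin_r 2 (Z.of_nat j)). lia.
Qed.

Section ZeroDimensional.
Variables (Y : Type) (d : Y -> Y -> R).
Hypothesis Hd : is_metric d.

Definition clopen_in (U : Y -> Prop) : Prop := open_in d U /\ open_in d (fun z => ~ U z).

Section ClopenCover.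
Variable B : Y -> Prop.
Hypothesis HB : open_in d B.

Definition clopen_ball_in (z : Y) (r : R) : Prop :=
  exists U, clopen_in U /\ (forall y, U y -> B y) /\ (forall y, (d z y < r)%R -> U y).

Lemma clopen_ball_in_near (Hz : zero_dim d) y :
  B y -> exists r, (0 < r)%R /\
    forall z r', (r' <= r)%R -> (d y z < r)%R -> clopen_ball_in z r'.
Proof.
  intro By. destruct Hd as (_ & _ & _ & Htri).
  destruct (HB y By) as [eps [Heps Hball]].
  destruct (Hz y eps Heps) as [U (HU & HUc & Uy & HUeps)].
  destruct (HU y Uy) as [del [Hdel HdelU]].
  exists (del / 2)%R. split; [lra|]. intros z r' Hr' Hyz. exists U. repeat split; auto.
  intros x Hzx. apply HdelU. pose proof (Htri y z x). lra.
Qed.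

(* Enumerate the pairs (m, k): C_(m,k) is a clopen subset of B that contains the ball of
   radius 1/(k+1) around the m-th point of a dense sequence whenever some clopen subset of
   B does. *)
Lemma clopen_cover_of_open :
  zero_dim d -> separable_metric d ->
  exists C : nat -> Y -> Prop, (forall j, clopen_in (C j)) /\
    (forall j y, C j y -> B y) /\ (forall y, B y -> exists j, C j y).
Proof.
  intros Hz [s Hs].
  pose (radius k := (/ INR (S k))%R).
  assert (Hchoice : forall j, exists U, clopen_in U /\ (forall y, U y -> B y) /\
            forall z, s (fst (Cantor.of_nat j)) = Some z ->
              clopen_ball_in z (radius (snd (Cantor.of_nat j))) ->
              forall y, (d z y < radius (snd (Cantor.of_nat j)))%R -> U y).
  { intro j. destruct (classic (exists z, s (fst (Cantor.of_nat j)) = Some z /\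
                        clopen_ball_in z (radius (snd (Cantor.of_nat j)))))
      as [[z [Hsz [U HU]]]|Hnone].
    - exists U. destruct HU as (HU & HUB & Hball).
      repeat split; try apply HU; auto. intros z' Hsz'. rewrite Hsz in Hsz'.
      inversion Hsz'; subst. intros _. exact Hball.
    - exists (fun _ => False). repeat split; try tauto.
      + intros y [].
      + intros y _. exists 1%R. split; [lra|auto].
      + intros z Hsz Hz'. exfalso. eauto. }
  exists (fun j => proj1_sig (constructive_indefinite_description _ (Hchoice j))).
  split; [|split].
  - intro j. destruct constructive_indefinite_description as [U HU]; simpl. apply HU.
  - intros j y. destruct constructive_indefinite_description as [U HU]; simpl. apply HU.
  - intros y By. destruct (clopen_ball_in_near Hz y By) as [r [Hr Hnear]].
    destruct (archimed_cor1 r Hr) as [N [HN HN0]].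
    assert (Hk : radius (pred N) = (/ INR N)%R) by (unfold radius; do 2 f_equal; lia).
    assert (Hpos : (0 < radius (pred N))%R)
      by (unfold radius; apply Rinv_0_lt_compat, lt_0_INR; lia).
    destruct (Hs y _ Hpos) as [m [z [Hsz Hyz]]].
    exists (Cantor.to_nat (m, pred N)).
    destruct constructive_indefinite_description as [U HU]; simpl.
    destruct HU as (_ & _ & HU).
    rewrite Cantor.cancel_of_to in HU. simpl in HU.
    destruct Hd as (_ & _ & Hsym & _).
    apply (HU z Hsz); [apply Hnear; lra|]. now rewrite Hsym.
Qed.

End ClopenCover.

Section FirstIndex.
Variable C : nat -> Y -> Prop.
Hypothesis HC : forall j, clopen_in (C j).

Definition first_index (y : Y) : nat :=
  epsilon (inhabits 0) (fun j => C j y /\ forall i, C i y -> j <= i).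

Lemma first_index_spec y j :
  C j y -> C (first_index y) y /\ forall i, C i y -> first_index y <= i.
Proof.
  intro Hj. unfold first_index. apply epsilon_spec.
  destruct (dec_inh_nat_subset_has_unique_least_element (fun i => C i y))
    as [i [Hi _]]; eauto using classic.
Qed.

Lemma first_index_eq y j : C j y -> (forall i, C i y -> j <= i) -> first_index y = j.
Proof.
  intros Hj Hmin. destruct (first_index_spec y j Hj) as [Hf Hfmin].
  apply Nat.le_antisymm; auto.
Qed.

Lemma not_C_below_locally M y :
  (forall j, j < M -> ~ C j y) ->
  exists eps, (0 < eps)%R /\ forall z, (d y z < eps)%R -> forall j, j < M -> ~ C j z.
Proof.
  induction M as [|M IH]; intro Hy.
  - exists 1%R. split; [lra|]. intros; lia.
  - destruct IH as [e1 [He1 H1]]; [intros; apply Hy; lia|].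
    destruct (proj2 (HC M) y (Hy M (Nat.lt_succ_diag_r M))) as [e2 [He2 H2]].
    exists (Rmin e1 e2). split; [now apply Rmin_pos|].
    intros z Hz j Hj. pose proof (Rmin_l e1 e2). pose proof (Rmin_r e1 e2).
    destruct (Nat.eq_dec j M) as [->|Hne]; [apply H2; lra|apply H1; [lra|lia]].
Qed.

Lemma first_index_locally_constant y j :
  C j y -> exists eps, (0 < eps)%R /\
    forall z, (d y z < eps)%R -> C (first_index y) z /\ first_index z = first_index y.
Proof.
  intro Hj. destruct (first_index_spec y j Hj) as [Hf Hfmin].
  destruct (proj1 (HC (first_index y)) y Hf) as [e1 [He1 H1]].
  destruct (not_C_below_locally (first_index y) y) as [e2 [He2 H2]].
  { intros i Hi Ci. specialize (Hfmin i Ci). lia. }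
  exists (Rmin e1 e2). split; [now apply Rmin_pos|].
  intros z Hz. pose proof (Rmin_l e1 e2). pose proof (Rmin_r e1 e2).
  assert (Cz : C (first_index y) z) by (apply H1; lra).
  split; [exact Cz|]. apply first_index_eq; [exact Cz|].
  intros i Ci. destruct (Nat.lt_ge_cases i (first_index y)) as [Hi|Hi]; [|exact Hi].
  exfalso. exact (H2 z ltac:(lra) i Hi Ci).
Qed.

Definition switch {W : Type} (Nj : nat -> W -> bool) (Ninf : W -> bool) (y : Y) : W -> bool :=
  if excluded_middle_informative (exists j, C j y) then Nj (first_index y) else Ninf.

Lemma switch_locally_constant {W : Type} (Nj : nat -> W -> bool) (Ninf : W -> bool) :
  (forall w, exists M, forall j, M <= j -> Nj j w = Ninf w) ->
  forall y w, exists eps, (0 < eps)%R /\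
    forall z, (d y z < eps)%R -> switch Nj Ninf z w = switch Nj Ninf y w.
Proof.
  intros Hconv y w. unfold switch at 2.
  destruct (excluded_middle_informative (exists j, C j y)) as [[j Hj]|Hy].
  - destruct (first_index_locally_constant y j Hj) as [eps [Heps Hloc]].
    exists eps. split; [exact Heps|]. intros z Hz. destruct (Hloc z Hz) as [Cz Hfz].
    unfold switch. destruct excluded_middle_informative as [_|Hnz].
    + now rewrite Hfz.
    + exfalso. eauto.
  - destruct (Hconv w) as [M HM].
    destruct (not_C_below_locally M y) as [eps [Heps Hfar]]; [eauto|].
    exists eps. split; [exact Heps|]. intros z Hz. unfold switch.
    destruct excluded_middle_informative as [[j Hj]|_]; [|reflexivity].
    apply HM. destruct (first_index_spec z j Hj) as [Hf _].
    destruct (Nat.lt_ge_cases (first_index z) M) as [Hlt|Hge]; [|exact Hge].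
    exfalso. exact (Hfar z Hz _ Hlt Hf).
Qed.

End FirstIndex.
End ZeroDimensional.

Lemma open_quotient_nilpotent n : open_G n (fun N => quotient_nilpotent n N).
Proof.
  intros N HN [k Hk]. destruct (open_nilpotent_class_le n k N HN Hk) as [L HL].
  exists L. intros N' HN' Hagree. exists k. now apply HL.
Qed.

Theorem mainTheorem9 (n : nat) (Hn : (1 < n)%nat) :
  (forall k : nat, (1 <= k)%nat ->
     clopen_G n (fun N => nilpotent_class_le n N k)) /\
  Sigma01_complete_G n (fun N => quotient_nilpotent n N).
Proof.
  split; [|split].
  - intros k _. split; [apply open_nilpotent_class_le|apply open_not_nilpotent_class_le].
  - apply open_quotient_nilpotent.
  - intros Y d (Hd & _ & Hsep) Hz B HB.
    destruct (clopen_cover_of_open Y d Hd B HB Hz Hsep) as (C & HC & HCB & HBC).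
    exists (switch Y C (fun j => N_pow2 n (S j)) (N_dih n)). split; [split|].
    + intro y. unfold switch.
      destruct excluded_middle_informative; auto using N_pow2_normal, N_dih_normal.
    + apply switch_locally_constant; [exact HC|]. intro w.
      destruct (N_pow2_eventually_N_dih n w) as [M HM]. exists M. intros j Hj. apply HM. lia.
    + intro y. unfold switch.
      destruct excluded_middle_informative as [[j Hj]|Hy]; split.
      * intros _. exact (HCB j y Hj).
      * intros _. exists (S (first_index Y C y)). apply N_pow2_nilpotent. lia.
      * intros [k Hk]. destruct (N_dih_not_nilpotent n k Hn Hk).
      * intro By. destruct (Hy (HBC y By)).
Qed.
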